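(* In a positive, anchored hidden Markov model with any (measurable) policy $g$, there exists a constant $0<\lambda<1$ such that for all $Z\in\mathcal P(\mathcal P(S))$ and all $t\ge0$, $F^t(Z)(R^c)\le\lambda^t$.
   Context: Model: $(X_t)$ is a time-homogeneous Markov chain on $S=\{1,\dots,n\}$ with transition matrix $T$; $O$ is a finite index set of observation processes $Y^{(i)}_t$ with values in $V=\{1,\dots,m\}$ and observation matrices $M^{(i)}$, $M^{(i)}_{jk}=\mathbb P(Y^{(i)}_t=k\mid X_t=j)$. $\mathcal P(S)$ is the probability simplex in $\mathbb R^n$, $\delta(x)$ the point mass at $x\in S$, $\mathcal P(\mathcal P(S))$ the Radon probability measures on $\mathcal P(S)$. A policy is a function $g:\mathcal P(S)\to O$, $A_i=g^{-1}\{i\}$ (the observation process used at time $t+1$ is $g$ of the current information state, i.e. the posterior distribution of $X_t$). For $i\in O$, $y\in V$: $\alpha_{i,y}(z)=(zTM^{(i)})_y=\sum_{j,x}z_jT_{j,x}M^{(i)}_{x,y}$, and when $\alpha_{i,y}(z)>0$, $r_{i,y}(z)=\frac{\sum_{x,j}M^{(i)}_{x,y}T_{j,x}z_j\delta(x)}{\sum_{x,j}M^{(i)}_{x,y}T_{j,x}z_j}$. The transition function $F:\mathcal P(\mathcal P(S))\to\mathcal P(\mathcal P(S))$ is $F(\mu)=\sum_{i\in O}\sum_{y\in V}\int_{A_i}\alpha_{i,y}(z)\delta_{r_{i,y}(z)}\,d\mu(z)$ (terms with $\alpha_{i,y}(z)=0$ are zero). Positive: all entries of $T$ are strictly positive.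 Anchored: $(X_t)$ is ergodic and for each $i\in O$ there are $x_i\in S$, $y_i\in V$ with $M^{(i)}_{x_i,y_i}>0$ and $M^{(i)}_{x,y_i}=0$ for $x\ne x_i$. Orbit $R_x$: $\delta(x)$ together with all points $r_{i_k,y_k}\circ\cdots\circ r_{i_1,y_1}(\delta(x))$ ($k\ge1$, arbitrary $i_j\in O$, $y_j\in V$) such that each $\alpha_{i_{j+1},y_{j+1}}$ evaluated at the preceding point is positive. $R=\bigcup_{x\in S}R_x$, and $R^c$ is its complement in $\mathcal P(S)$. *)

From HB Require Import structures.
From mathcomp Require Import all_boot all_order all_algebra.
From mathcomp Require Import all_classical all_reals all_analysis.
Set Implicit Arguments. Unset Strict Implicit. Unset Printing Implicit Defensive.
Import Order.TTheory GRing.Theory Num.Theory.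
Import numFieldNormedType.Exports.
Local Open Scope classical_set_scope.
Local Open Scope ring_scope.

(* Points of P(S) are row vectors z : 'rV[R]_n (z 0 j = probability of state j). *)
Notation Borel_rV R n :=
  (g_sigma_algebraType (@open 'rV[R]_n)).

Definition simplex (R : realType) (n : nat) : set 'rV[R]_n :=
  [set z | (forall j, 0 <= z 0 j) /\ \sum_j z 0 j = 1].
Arguments simplex : clear implicits.

Definition pt_mass (R : realType) (n : nat) (x : 'I_n) : 'rV[R]_n :=
  delta_mx 0 x.
Arguments pt_mass R {n} x.

Definition stochastic (R : realType) (p q : nat) (A : 'M[R]_(p, q)) : Prop :=
  (forall i j, 0 <= A i j) /\ (forall i, \sum_j A i j = 1).

Definition positive_mx (R : realType) (n : nat) (T : 'M[R]_n) : Prop :=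
  forall i j, 0 < T i j.

(* ergodic finite chain (irreducible and aperiodic) = some power of T has
   all entries strictly positive (regular / primitive transition matrix) *)
Definition ergodic (R : realType) (n : nat) (T : 'M[R]_n) : Prop :=
  exists k : nat, forall i j, 0 < (T ^+ k.+1) i j.

Definition anchored (R : realType) (n m : nat) (O : finType)
  (T : 'M[R]_n) (M : O -> 'M[R]_(n, m)) : Prop :=
  ergodic T /\
  forall i : O, exists xi : 'I_n, exists yi : 'I_m,
    0 < M i xi yi /\ forall x, x != xi -> M i x yi = 0.

Definition alpha (R : realType) (n m : nat) (O : finType)
  (T : 'M[R]_n) (M : O -> 'M[R]_(n, m)) (i : O) (y : 'I_m) (z : 'rV[R]_n) : R :=
  (z *m T *m M i) 0 y.

(* r_{i,y}(z) = sum_x M_{x,y} (zT)_x delta(x) / alpha_{i,y}(z)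
   (only meaningful when alpha_{i,y}(z) > 0) *)
Definition rmap (R : realType) (n m : nat) (O : finType)
  (T : 'M[R]_n) (M : O -> 'M[R]_(n, m)) (i : O) (y : 'I_m) (z : 'rV[R]_n)
  : 'rV[R]_n :=
  \row_x (M i x y * (z *m T) 0 x / alpha T M i y z).

Inductive orbitR (R : realType) (n m : nat) (O : finType)
  (T : 'M[R]_n) (M : O -> 'M[R]_(n, m)) : 'rV[R]_n -> Prop :=
| orbitR_base (x : 'I_n) : orbitR T M (pt_mass R x)
| orbitR_step (i : O) (y : 'I_m) (z : 'rV[R]_n) :
    orbitR T M z -> 0 < alpha T M i y z -> orbitR T M (rmap T M i y z).

Definition Rcomp (R : realType) (n m : nat) (O : finType)
  (T : 'M[R]_n) (M : O -> 'M[R]_(n, m)) : set 'rV[R]_n :=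
  simplex R n `\` orbitR T M.

(* A sequence of probability measures Zs on P(S) (measures on R^n carried by
   the simplex) is the F-orbit of Zs 0 under policy g:
   Zs (t+1) (B) = sum_i sum_y int_{A_i} alpha_{i,y}(z) 1_B(r_{i,y}(z)) dZs t (z). *)
Definition F_trajectory (R : realType) (n m : nat) (O : finType)
  (T : 'M[R]_n) (M : O -> 'M[R]_(n, m)) (g : 'rV[R]_n -> O)
  (Zs : nat -> probability (Borel_rV R n) R) : Prop :=
  Zs 0%N (simplex R n) = 1%E /\
  forall (t : nat) (B : set (Borel_rV R n)), measurable B ->
    Zs t.+1 B =
    (\sum_(i : O) \sum_(y < m)
       \int[Zs t]_(z in simplex R n `&` g @^-1` [set i])
          ((alpha T M i y z)%:E * (\1_B (rmap T M i y z))%:E))%E.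

From HB Require Import structures.
From mathcomp Require Import all_boot all_order all_algebra.
From mathcomp Require Import all_classical all_reals all_analysis.
From mathcomp Require Import measurable_realfun lra.
Import Order.TTheory GRing.Theory Num.Theory.
Import numFieldNormedType.Exports.
Local Open Scope classical_set_scope.
Local Open Scope ring_scope.
Set Implicit Arguments. Unset Strict Implicit. Unset Printing Implicit Defensive.

(* Positivity of T and the anchoring observations give a uniform c > 0 such
   that, from every belief z, the anchored outcome y_i of the observation i
   used next has probability alpha_{i,y_i}(z) >= c and resets the belief to
   the point mass delta(x_i), which lies in R.  As R is also invariant under
   every update r_{i,y}, mass can reach R^c only from beliefs already in R^c
   and through a non-anchored outcome, so F(Z)(R^c) <= (1 - c) Z(R^c). *)

Section stochastic_matrices.
Variable R : realType.

Lemma stochastic_le1 p q (A : 'M[R]_(p, q)) i j : stochastic A -> A i j <= 1.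
Proof.
move=> [A0 A1]; rewrite -(A1 i) (bigD1 j) //= lerDl.
by apply: sumr_ge0 => k _; exact: A0.
Qed.

Lemma simplex_mulmx p q (z : 'rV[R]_p) (A : 'M[R]_(p, q)) :
  simplex R p z -> stochastic A -> simplex R q (z *m A).
Proof.
move=> [z0 z1] [A0 A1]; split=> [x|].
  by rewrite mxE; apply: sumr_ge0 => j _; exact: mulr_ge0.
under eq_bigr do rewrite mxE.
rewrite exchange_big /= -[RHS]z1; apply: eq_bigr => j _.
by rewrite -mulr_sumr A1 mulr1.
Qed.

Lemma simplex_mulmx_ge p q (z : 'rV[R]_p) (A : 'M[R]_(p, q)) (c : R) x :
  (forall j, c <= A j x) -> simplex R p z -> c <= (z *m A) 0 x.
Proof.
move=> cA [z0 z1]; rewrite mxE -[c]mul1r -z1 mulr_suml.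
by apply: ler_sum => j _; exact: ler_wpM2l.
Qed.

Lemma prodr_le_factor (I : finType) (F : I -> R) j :
  (forall i, 0 <= F i <= 1) -> \prod_i F i <= F j.
Proof.
move=> F01; rewrite (bigD1 j) //= ler_piMr //; first by case/andP: (F01 j).
by apply: prodr_ile1 => i _.
Qed.

End stochastic_matrices.

Section belief_update.
Variables (R : realType) (n m : nat) (O : finType).
Variables (T : 'M[R]_n) (M : O -> 'M[R]_(n, m)).
Hypotheses (sT : stochastic T) (sM : forall i, stochastic (M i)).

Lemma alpha_ge0 i y z : simplex R n z -> 0 <= alpha T M i y z.
Proof. by move=> Sz; exact: (simplex_mulmx (simplex_mulmx Sz sT) (sM i)).1. Qed.

Lemma sum_alpha i z : simplex R n z -> \sum_y alpha T M i y z = 1.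
Proof. by move=> Sz; exact: (simplex_mulmx (simplex_mulmx Sz sT) (sM i)).2. Qed.

Section anchor.
Variables (i : O) (xi : 'I_n) (yi : 'I_m).
Hypothesis anchor : forall x, x != xi -> M i x yi = 0.

Lemma alpha_anchor z : alpha T M i yi z = (z *m T) 0 xi * M i xi yi.
Proof.
by rewrite /alpha mxE (bigD1 xi) //= big1 ?addr0 // => x /anchor ->; rewrite mulr0.
Qed.

Lemma rmap_anchor z : 0 < alpha T M i yi z -> rmap T M i yi z = pt_mass R xi.
Proof.
rewrite /rmap alpha_anchor => apos.
apply/rowP => x; rewrite /pt_mass mxE [in RHS]mxE eqxx /=.
have [->|xn] := eqVneq x xi; last by rewrite anchor // !mul0r.
by rewrite [X in X / _]mulrC divff ?gt_eqF.
Qed.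

End anchor.

Lemma uniform_anchor_escape : positive_mx T -> anchored T M ->
  exists c : R, 0 < c <= 1 /\ exists a : O -> 'I_m, forall i z, simplex R n z ->
    c <= alpha T M i (a i) z /\ orbitR T M (rmap T M i (a i) z).
Proof.
move=> pT [_ anch].
have /choice [f anch_f] : forall i, exists p : 'I_n * 'I_m,
    0 < M i p.1 p.2 /\ forall x, x != p.1 -> M i x p.2 = 0.
  by move=> i; have [xi [yi ?]] := anch i; exists (xi, yi).
(* Products of entries in (0, 1] bound each factor from below, with no minimum
   over a possibly empty index set to take. *)
pose cT := \prod_(p : 'I_n * 'I_n) T p.1 p.2.
pose cM := \prod_i M i (f i).1 (f i).2.
have T01 (p : 'I_n * 'I_n) : 0 <= T p.1 p.2 <= 1 by rewrite ltW ?pT ?stochastic_le1.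
have M01 i : 0 <= M i (f i).1 (f i).2 <= 1 by rewrite ltW ?(anch_f i).1 ?stochastic_le1.
have cT_gt0 : 0 < cT by apply: prodr_gt0 => p _; exact: pT.
have cM_gt0 : 0 < cM by apply: prodr_gt0 => i _; exact: (anch_f i).1.
exists (cT * cM); split.
  rewrite mulr_gt0 //=; apply: mulr_ile1; [exact: ltW | exact: ltW | |].
  - by apply: prodr_ile1 => p _.
  - by apply: prodr_ile1 => i _.
exists (fun i => (f i).2) => i z Sz.
have c_le : cT * cM <= alpha T M i (f i).2 z.
  rewrite (alpha_anchor (anch_f i).2).
  apply: ler_pM; [exact: ltW | exact: ltW | | exact: prodr_le_factor].
  by apply: simplex_mulmx_ge Sz => j; exact: (prodr_le_factor (j, (f i).1) T01).
split=> //; rewrite (rmap_anchor (anch_f i).2); first exact: orbitR_base.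
exact: lt_le_trans (mulr_gt0 cT_gt0 cM_gt0) c_le.
Qed.

End belief_update.

Section integral_lemmas.
Context d (U : measurableType d) (R : realType).
Variable mu : {measure set U -> \bar R}.
Local Open Scope ereal_scope.

(* Needed because the integrands of F, which involve r_{i,y}, are never shown
   to be measurable. *)
Lemma ge0_le_integral_nonmeasurable (D : set U) (f g : U -> \bar R) :
  (forall x, D x -> 0 <= f x) -> (forall x, D x -> f x <= g x) ->
  \int[mu]_(x in D) f x <= \int[mu]_(x in D) g x.
Proof.
move=> f0 fg.
have g0 x : D x -> 0 <= g x by move=> Dx; exact: le_trans (f0 _ Dx) (fg _ Dx).
rewrite (ge0_integralE _ f0) (ge0_integralE _ g0).
apply: ereal_sup_le => _ [h hf <-]; exists h => // x.
by apply: le_trans (hf x) _; exact: lee_restrict.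
Qed.

Lemma measure_fibers (I : finType) (h : U -> I) (B : set U) :
  (forall i, measurable (B `&` h @^-1` [set i])) ->
  \sum_(i : I) mu (B `&` h @^-1` [set i]) = mu B.
Proof.
move=> mBh.
have BE : B = \bigcup_(i in [set: I]) (B `&` h @^-1` [set i]).
  by apply/seteqP; split => [z Bz|z [i _ []] //]; exists (h z).
rewrite [in RHS]BE measure_fin_bigcup //; last 2 first.
- exact: finite_finset.
- by move=> i j _ _ [z [[_ <-] [_ <-]]].
rewrite (fsbigE (index_enum I)) ?index_enum_uniq //; last first.
  by move=> i _; rewrite mem_index_enum.
by apply: eq_bigl => i; rewrite in_setT.
Qed.

End integral_lemmas.

Section Borel_rV.
Variables (R : realType) (n : nat).

Lemma open_measurable_rV (A : set 'rV[R]_n) : open A -> measurable (A : set (Borel_rV R n)).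
Proof. exact: sub_sigma_algebra. Qed.

Lemma measurable_set1_rV (p : 'rV[R]_n) : measurable ([set p] : set (Borel_rV R n)).
Proof.
rewrite -[X in measurable X]setCK; apply: measurableC; apply: open_measurable_rV.
apply: closed_openC; apply: accessible_closed_set1; apply: hausdorff_accessible.
exact: norm_hausdorff.
Qed.

Lemma measurable_coord (j : 'I_n) :
  measurable_fun (setT : set (Borel_rV R n)) (fun z : 'rV[R]_n => z 0 j).
Proof.
apply: (@measurability _ _ _ _ _ _ (@RGenInftyO.G R)).
  exact: RGenInftyO.measurableE.
move=> _ [_ [x ->] <-].
rewrite setTI; apply: open_measurable_rV; apply: open_comp; last exact: open_lt.
by move=> z _; exact: coord_continuous.
Qed.

End Borel_rV.

Section orbit_measurability.
Variables (R : realType) (n m : nat) (O : finType).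
Variables (T : 'M[R]_n) (M : O -> 'M[R]_(n, m)).

Lemma measurable_alpha i y :
  measurable_fun (setT : set (Borel_rV R n)) (alpha T M i y).
Proof.
have -> : alpha T M i y = fun z => \sum_j z 0 j * (T *m M i) j y.
  by apply/funext => z; rewrite /alpha -mulmxA mxE.
by apply: measurable_sum => j; apply: measurable_funM => //; exact: measurable_coord.
Qed.

Fixpoint rmap_iter (x : 'I_n) (s : seq (O * 'I_m)) : 'rV[R]_n :=
  if s is p :: s' then rmap T M p.1 p.2 (rmap_iter x s') else pt_mass R x.

Lemma countable_orbitR : countable (orbitR T M).
Proof.
have orbit_sub : orbitR T M `<=` (fun p => rmap_iter p.1 p.2) @` setT.
  move=> w; elim => [x|i y z _ [[x s] _ <-] _]; first by exists (x, [::]).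
  by exists (x, (i, y) :: s).
apply: sub_countable (countableP setT).
exact: card_le_trans (subset_card_le orbit_sub) (card_image_le _ _).
Qed.

Lemma measurable_orbitR : measurable (orbitR T M : set (Borel_rV R n)).
Proof.
by apply: countable_measurable; [exact: measurable_set1_rV | exact: countable_orbitR].
Qed.

End orbit_measurability.

Section Rcomp_contraction.
Variables (R : realType) (n m : nat) (O : finType).
Variables (T : 'M[R]_n) (M : O -> 'M[R]_(n, m)).
Hypotheses (sT : stochastic T) (sM : forall i, stochastic (M i)).

Local Notation Rc := (Rcomp T M).

Lemma setI_Rcomp_simplex (B : set 'rV[R]_n) : Rc `&` (simplex R n `&` B) = Rc `&` B.
Proof. by rewrite setIA (@setIidl _ Rc) // => z []. Qed.

Variables (c : R) (a : O -> 'I_m).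
Hypothesis c_le1 : c <= 1.
Hypothesis escape : forall i z, simplex R n z ->
  c <= alpha T M i (a i) z /\ orbitR T M (rmap T M i (a i) z).

Lemma indic_Rcomp_rmap_le i y z : simplex R n z -> 0 < alpha T M i y z ->
  \1_Rc (rmap T M i y z) <= (y != a i)%:R * \1_Rc z :> R.
Proof.
move=> Sz apos.
have orbit_indic0 w : orbitR T M w -> \1_Rc w = 0 :> R.
  by move=> Ow; rewrite indicE memNset // => -[].
have [->|_] := eqVneq y (a i).
  by rewrite orbit_indic0 ?mul0r //; exact: (escape i Sz).2.
rewrite mul1r; have [Oz|nOz] := pselect (orbitR T M z).
  by rewrite orbit_indic0 //; exact: orbitR_step.
by rewrite !indicE (@mem_set _ Rc z) // ler_nat leq_b1.
Qed.

Lemma alpha_indic_rmap_le i y z : simplex R n z ->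
  alpha T M i y z * \1_Rc (rmap T M i y z)
    <= alpha T M i y z * ((y != a i)%:R * \1_Rc z).
Proof.
move=> Sz; have := alpha_ge0 sT sM i y Sz; rewrite le_eqVlt => /predU1P [<-|apos].
  by rewrite !mul0r.
by rewrite ler_pM2l // indic_Rcomp_rmap_le.
Qed.

Lemma sum_alpha_off_anchor i z : simplex R n z ->
  \sum_y alpha T M i y z * (y != a i)%:R <= 1 - c.
Proof.
move=> Sz; have := sum_alpha sT sM i Sz; rewrite (bigD1 (a i)) //= => sum1.
rewrite (bigD1 (a i)) //= eqxx mulr0 add0r.
under eq_bigr => y /negbTE -> do rewrite mulr1.
by have := (escape i Sz).1; lra.
Qed.

Variable g : 'rV[R]_n -> O.
Hypothesis mA : forall i,
  measurable (simplex R n `&` g @^-1` [set i] : set (Borel_rV R n)).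

Lemma measurable_Rcomp : measurable (Rc : set (Borel_rV R n)).
Proof.
apply: measurableD (measurable_orbitR T M).
have -> : simplex R n = \bigcup_(i in [set: O]) (simplex R n `&` g @^-1` [set i]).
  by apply/seteqP; split => [z Sz|z [i _ []] //]; exists (g z).
by apply: fin_bigcup_measurable => [|i _]; [exact: finite_finset | exact: mA].
Qed.

Variable mu : {measure set (Borel_rV R n) -> \bar R}.

Lemma Rcomp_contraction_fiber i :
  (\sum_(y < m) \int[mu]_(z in simplex R n `&` g @^-1` [set i])
     ((alpha T M i y z)%:E * (\1_Rc (rmap T M i y z))%:E)
   <= (1 - c)%:E * mu (Rc `&` g @^-1` [set i]))%E.
Proof.
set A : set (Borel_rV R n) := simplex R n `&` g @^-1` [set i].
have off_ge0 y z : A z -> 0 <= alpha T M i y z * ((y != a i)%:R * \1_Rc z).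
  by move=> [Sz _]; rewrite mulr_ge0 ?alpha_ge0 // mulr_ge0.
have moff y : measurable_fun A
    (fun z => (alpha T M i y z * ((y != a i)%:R * \1_Rc z))%:E).
  apply/measurable_EFinP; apply: measurable_funM.
    exact: measurable_funS (measurable_alpha T M i y).
  by apply: measurable_funM => //; exact: measurable_indic measurable_Rcomp.
apply: (@le_trans _ _ (\sum_(y < m) \int[mu]_(z in A)
    (alpha T M i y z * ((y != a i)%:R * \1_Rc z))%:E)%E).
  apply: lee_sum => y _; apply: ge0_le_integral_nonmeasurable => z [Sz _].
    by rewrite -EFinM lee_fin mulr_ge0 ?alpha_ge0.
  by rewrite -EFinM lee_fin alpha_indic_rmap_le.
rewrite -(ge0_integral_sum _ (mA i) moff); last by move=> y z Az; rewrite lee_fin off_ge0.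
apply: (@le_trans _ _ (\int[mu]_(z in A) ((1 - c)%:E * (\1_Rc z)%:E))%E).
  apply: ge0_le_integral_nonmeasurable => z Az.
    by apply: sume_ge0 => y _; rewrite lee_fin off_ge0.
  rewrite sumEFin -EFinM lee_fin.
  under eq_bigr do rewrite mulrA.
  by rewrite -mulr_suml ler_wpM2r ?sum_alpha_off_anchor //; case: Az.
have mAi : measurable A := mA i.
have mRc := measurable_Rcomp.
have mRcA : measurable_fun A (EFin \o (\1_Rc : Borel_rV R n -> R)).
  exact/measurable_EFinP/measurable_indic.
by rewrite ge0_integralZl_EFin ?subr_ge0 // integral_indic // setI_Rcomp_simplex.
Qed.

Lemma Rcomp_contraction :
  (\sum_(i : O) \sum_(y < m) \int[mu]_(z in simplex R n `&` g @^-1` [set i])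
     ((alpha T M i y z)%:E * (\1_Rc (rmap T M i y z))%:E) <= (1 - c)%:E * mu Rc)%E.
Proof.
have mRcg i : measurable (Rc `&` g @^-1` [set i] : set (Borel_rV R n)).
  by rewrite -setI_Rcomp_simplex; exact: measurableI measurable_Rcomp (mA i).
rewrite -(measure_fibers mu mRcg) ge0_sume_distrr; last by move=> i _.
by apply: lee_sum => i _; exact: Rcomp_contraction_fiber.
Qed.

End Rcomp_contraction.

Theorem proposition2p21 (R : realType) (n m : nat) (O : finType)
  (T : 'M[R]_n) (M : O -> 'M[R]_(n, m)) (g : 'rV[R]_n -> O) :
  stochastic T -> (forall i, stochastic (M i)) ->
  positive_mx T -> anchored T M ->
  (forall i : O, measurable (simplex R n `&` g @^-1` [set i]
                              : set (Borel_rV R n))) ->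
  exists lambda : R, 0 < lambda < 1 /\
    forall Zs : nat -> probability (Borel_rV R n) R,
      F_trajectory T M g Zs ->
      forall t : nat, (Zs t (Rcomp T M) <= (lambda ^+ t)%:E)%E.
Proof.
move=> sT sM pT anch mA.
have [c [/andP [c_gt0 c_le1] [a escape]]] := uniform_anchor_escape sT sM pT anch.
(* 1 - c may vanish, hence the margin. *)
exists (1 - c / 2); split; first by apply/andP; split; lra.
move=> Zs [_ Zstep]; have mRc := measurable_Rcomp T M mA.
elim => [|t IH]; first by rewrite expr0 probability_le1.
rewrite Zstep //; apply: le_trans (Rcomp_contraction sT sM c_le1 escape mA (Zs t)) _.
rewrite exprS EFinM lee_pmul ?lee_fin //; lra.
Qed.
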